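(* Let $(X,\mathcal{B},\mu)$ be a $\sigma$-finite measure space and let $\varphi:X\to X$ be a measurable map for which there is $c>0$ with $\mu(\varphi^{-1}(B))\le c\,\mu(B)$ for all $B\in\mathcal{B}$. For $1\le q<\infty$ let $T_\varphi$ denote the composition operator $f\mapsto f\circ\varphi$ on $L^q(X,\mathcal{B},\mu)$. Then for any $p,p'\in[1,\infty)$, $T_\varphi$ is distributionally chaotic on $L^p(X,\mathcal{B},\mu)$ if and only if $T_\varphi$ is distributionally chaotic on $L^{p'}(X,\mathcal{B},\mu)$.
   Context: For $A\subseteq\mathbb{N}$, $\overline{\mathrm{dens}}(A)=\limsup_{N\to\infty}\frac{\operatorname{card}(A\cap[1,N])}{N}$ and $\underline{\mathrm{dens}}(A)=\liminf_{N\to\infty}\frac{\operatorname{card}(A\cap[1,N])}{N}$. An operator $T$ on a Banach space $Y$ is distributionally chaotic if there exist an uncountable set $\Gamma\subset Y$ and $\varepsilon>0$ such that for every $\delta>0$ and every pair of distinct $x,y\in\Gamma$: $\underline{\mathrm{dens}}\{j\in\mathbb{N}:\|T^jx-T^jy\|<\varepsilon\}=0$ and $\overline{\mathrm{dens}}\{j\in\mathbb{N}:\|T^jx-T^jy\|<\delta\}=1$. *)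

From HB Require Import structures.
From mathcomp Require Import all_boot all_order all_algebra.
From mathcomp Require Import all_classical all_reals all_analysis.
Set Implicit Arguments. Unset Strict Implicit. Unset Printing Implicit Defensive.
Import Order.TTheory GRing.Theory Num.Theory.
Import numFieldNormedType.Exports.
Local Open Scope classical_set_scope.
Local Open Scope ring_scope.

Definition dens_ratio (R : realType) (A : set nat) (N : nat) : R :=
  (\sum_(1 <= j < N.+1) (j \in A : nat))%N%:R / N%:R.

Definition upper_dens (R : realType) (A : set nat) : \bar R :=
  limn_esup (fun N => (dens_ratio R A N)%:E).
Definition lower_dens (R : realType) (A : set nat) : \bar R :=
  limn_einf (fun N => (dens_ratio R A N)%:E).

Definition in_Lp d (T : measurableType d) (R : realType)
    (mu : {measure set T -> \bar R}) (p : R) (f : T -> R) : Prop :=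
  measurable_fun setT f /\ finite_norm mu p%:E f.

(* || T_phi^j f - T_phi^j g ||_p = || (f - g) o phi^j ||_p *)
Definition comp_iter_dist d (T : measurableType d) (R : realType)
    (mu : {measure set T -> \bar R}) (p : R) (phi : T -> T)
    (f g : T -> R) (j : nat) : \bar R :=
  Lnorm mu p%:E (EFin \o (fun x => f (iter j phi x) - g (iter j phi x))).

(* Elements of L^p are a.e.-classes; Gamma is given by a set of
   representatives, pairwise not a.e. equal, so that Gamma is in bijection
   with an (uncountable) subset of L^p(mu). *)
Definition comp_distr_chaotic d (T : measurableType d) (R : realType)
    (mu : {measure set T -> \bar R}) (p : R) (phi : T -> T) : Prop :=
  exists Gamma : set (T -> R),
    [/\ (forall f, Gamma f -> in_Lp mu p f),
        (forall f g, Gamma f -> Gamma g -> f = g %[ae mu] -> f = g),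
        ~ countable Gamma &
    exists2 eps : R, 0 < eps &
      forall delta : R, 0 < delta ->
      forall f g, Gamma f -> Gamma g -> f <> g ->
        lower_dens R [set j | (comp_iter_dist mu p phi f g j < eps%:E)%E] = 0%E
        /\ upper_dens R [set j | (comp_iter_dist mu p phi f g j < delta%:E)%E] = 1%E].

(* Fix exponents p, q > 0.  A distributionally scrambled pair f, g for T_phi on
   L^p gives the nonnegative function h = |f - g|^p, whose orbit integrals
   a_j = \int h o phi^j are below any r > 0 on a set of upper density one and
   above eps^p on another one; the hypothesis on phi gives a_(i+j) <= C^i a_j.
   Choosing lags m_k inductively, with a_(m_k) tiny and a_j tiny for most j up
   to a horizon chosen afterwards, the function G = sum_k (k+1) h o phi^(m_k) is
   integrable and its orbit integrals b_j = sum_k (k+1) a_(m_k + j) are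
   distributionally irregular: below any r > 0 on a set of upper density one
   and above any M on another one.  Then w = G^(1/q) lies in L^q and, since
   ||T_phi^j (l w - l' w)||_q^q = |l - l'|^q b_j, the segment
   {l w | 0 < l <= 1} is an uncountable distributionally scrambled set for
   T_phi on L^q. *)

From HB Require Import structures.
From mathcomp Require Import all_boot all_order all_algebra.
From mathcomp Require Import all_classical all_reals all_analysis.
From mathcomp Require Import measurable_realfun lra.
Import Order.TTheory GRing.Theory Num.Theory.
Local Open Scope classical_set_scope.
Local Open Scope ring_scope.

Definition full_upper_dens (R : realType) (A : set nat) :=
  forall e : R, 0 < e -> forall M, exists2 N, (M <= N)%N & 1 - e < dens_ratio R A N.

Definition null_lower_dens (R : realType) (A : set nat) :=
  forall e : R, 0 < e -> forall M, exists2 N, (M <= N)%N & dens_ratio R A N < e.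

Section density.
Context {R : realType}.

Definition dens_count (A : set nat) N := (\sum_(1 <= j < N.+1) (j \in A : nat))%N.

Lemma dens_ratioE A N : dens_ratio R A N = (dens_count A N)%:R / N%:R.
Proof. by []. Qed.

Lemma dens_count_le A N : (dens_count A N <= N)%N.
Proof.
apply: (@leq_trans (\sum_(1 <= j < N.+1) 1)%N).
  by apply: leq_sum => j _; exact: leq_b1.
by rewrite sum_nat_const_nat subn1 muln1.
Qed.

Lemma dens_ratio_ge0 A N : 0 <= dens_ratio R A N.
Proof. by rewrite dens_ratioE divr_ge0. Qed.

Lemma dens_ratio_le1 A N : dens_ratio R A N <= 1.
Proof.
rewrite dens_ratioE; case: N => [|N]; first by rewrite invr0 mulr0.
by rewrite ler_pdivrMr ?ltr0Sn // mul1r ler_nat dens_count_le.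
Qed.

Lemma dens_ratioC A N : (0 < N)%N -> dens_ratio R (~` A) N = 1 - dens_ratio R A N.
Proof.
move=> N_gt0; rewrite !dens_ratioE.
have countC : (dens_count (~` A) N + dens_count A N = N)%N.
  rewrite /dens_count -big_split /= (eq_bigr (fun=> 1%N)).
    by rewrite sum_nat_const_nat subn1 muln1.
  by move=> i _; rewrite in_setC; case: (i \in A).
rewrite -[X in X / _ = _](addrK (dens_count A N)%:R) -natrD countC mulrBl divff //.
by rewrite pnatr_eq0 -lt0n.
Qed.

Lemma le_dens_ratio (A B : set nat) N :
  (forall j, (0 < j <= N)%N -> A j -> B j) -> dens_ratio R A N <= dens_ratio R B N.
Proof.
move=> AB; rewrite !dens_ratioE ler_wpM2r // ler_nat /dens_count.
rewrite big_nat_cond [leqRHS]big_nat_cond.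
apply: leq_sum => j /andP[/andP[j_gt0 jN] _].
case: (boolP (j \in A)) => // /set_mem Aj.
by rewrite mem_set //; apply: AB => //; rewrite j_gt0 -ltnS.
Qed.

Lemma dens_count_shift B m N :
  (dens_count B (N + m) <= m + dens_count [set j | B (j + m)] N)%N.
Proof.
rewrite /dens_count (@big_cat_nat _ _ _ m.+1) //=; last by rewrite ltnS leq_addl.
apply: leq_add; first exact: (dens_count_le B m).
rewrite -(add1n m) big_addn -addSn addnK; apply: leq_sum => i _.
by case: (boolP (i + m \in B)) => // /set_mem Bim; rewrite mem_set.
Qed.

Lemma upper_dens1P {A} : upper_dens R A = 1%E <-> full_upper_dens R A.
Proof.
set u := fun N => (dens_ratio R A N)%:E.
have esups_lim : limn (esups u) = ereal_inf (range (esups u)).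
  by apply: cvg_lim => //; exact: cvg_esups_inf.
rewrite /upper_dens limn_esup_lim -/u; split => [U e e_gt0 M|F].
  rewrite esups_lim in U; have : ((1 - e)%:E < ereal_sup (sdrop u M))%E.
    apply: (@lt_le_trans _ _ 1%E); first by rewrite lte_fin gtrBl.
    by rewrite -U; apply: ereal_inf_lbound; exists M.
  by case/ereal_sup_gt => _ [N MN <-]; rewrite lte_fin; exists N.
suff -> : esups u = fun=> 1%E by apply: cvg_lim => //; exact: cvg_cst.
apply/funext => M; apply/eqP; rewrite eq_le; apply/andP; split.
  by apply: ge_ereal_sup => _ [N _ <-]; rewrite lee_fin dens_ratio_le1.
apply/lee_subgt0Pr => e e_gt0; have [N MN ratioN] := F e e_gt0 M.
apply: le_ereal_sup_tmp; exists (u N); first by exists N.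
by rewrite /u -EFinB lee_fin ltW.
Qed.

Lemma lower_dens0P {A} : lower_dens R A = 0%E <-> null_lower_dens R A.
Proof.
set u := fun N => (dens_ratio R A N)%:E.
have einfs_lim : limn (einfs u) = ereal_sup (range (einfs u)).
  by apply: cvg_lim => //; exact: cvg_einfs_sup.
rewrite /lower_dens limn_einf_lim -/u; split => [U e e_gt0 M|F].
  rewrite einfs_lim in U; have : (ereal_inf (sdrop u M) < e%:E)%E.
    apply: (@le_lt_trans _ _ 0%E); last by rewrite lte_fin.
    by rewrite -U; apply: ereal_sup_ubound; exists M.
  by case/ereal_inf_lt => _ [N MN <-]; rewrite lte_fin; exists N.
suff -> : einfs u = fun=> 0%E by apply: cvg_lim => //; exact: cvg_cst.
apply/funext => M; apply/eqP; rewrite eq_le; apply/andP; split; last first.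
  by apply: le_ereal_inf_tmp => _ [N _ <-]; rewrite lee_fin dens_ratio_ge0.
apply/lee_addgt0Pr => e e_gt0; have [N MN ratioN] := F e e_gt0 M.
apply: ge_ereal_inf; exists (u N); first by exists N.
by rewrite /u add0e lee_fin ltW.
Qed.

Lemma null_lower_densC {A} : null_lower_dens R A -> full_upper_dens R (~` A).
Proof.
move=> F e e_gt0 M; have [N MN ratioN] := F e e_gt0 (maxn M 1).
exists N; first by apply: leq_trans MN; rewrite leq_maxl.
rewrite dens_ratioC ?ltrD2l ?ltrN2 //.
by apply: leq_trans MN; rewrite leq_maxr.
Qed.

Lemma full_upper_densC {A} : full_upper_dens R A -> null_lower_dens R (~` A).
Proof.
move=> F e e_gt0 M; have [N MN ratioN] := F e e_gt0 (maxn M 1).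
exists N; first by apply: leq_trans MN; rewrite leq_maxl.
rewrite dens_ratioC; first by rewrite ltrBlDr addrC -ltrBlDr.
by apply: leq_trans MN; rewrite leq_maxr.
Qed.

Lemma full_upper_dens_sub {A B : set nat} : A `<=` B ->
  full_upper_dens R A -> full_upper_dens R B.
Proof.
move=> AB F e e_gt0 M; have [N MN ratioN] := F e e_gt0 M; exists N => //.
by apply: (lt_le_trans ratioN); apply: le_dens_ratio => j _ /AB.
Qed.

Lemma null_lower_dens_sub {A B : set nat} : B `<=` A ->
  null_lower_dens R A -> null_lower_dens R B.
Proof.
move=> BA F e e_gt0 M; have [N MN ratioN] := F e e_gt0 M; exists N => //.
by apply: le_lt_trans ratioN; apply: le_dens_ratio => j _ /BA.
Qed.

(* Shifting by m changes the counting function by at most m, which is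
   negligible against N. *)
Lemma full_upper_dens_shift {B} m :
  full_upper_dens R B -> full_upper_dens R [set j | B (j + m)%N].
Proof.
move=> F e e_gt0 M.
have e2_gt0 : 0 < e / 2 by rewrite divr_gt0.
set K := (Num.truncn (2 * m%:R / e)).+1.
have [N' N'M ratioN'] := F (e / 2) e2_gt0 (M + K + m).
have mN' : (m <= N')%N by apply: leq_trans N'M; rewrite leq_addl.
set N := (N' - m)%N; have N'E : N' = (N + m)%N by rewrite subnK.
have MKN : (M + K <= N)%N by rewrite leq_subRL // addnC.
exists N; first by apply: leq_trans MKN; rewrite leq_addr.
have KN : (K <= N)%N by apply: leq_trans MKN; rewrite leq_addl.
have N_gt0 : 0 < N%:R :> R by rewrite ltr0n (leq_trans _ KN).
have m_small : m%:R / N%:R < e / 2.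
  rewrite ltr_pdivrMr // -ltr_pdivrMl // invf_div mulrAC.
  by apply: (lt_le_trans (truncnS_gt _)); rewrite ler_nat.
have ratio_le : dens_ratio R B N' <= (dens_count B N')%:R / N%:R.
  rewrite dens_ratioE ler_wpM2l // lef_pV2 ?posrE ?ler_nat ?leq_subr //.
  by rewrite ltr0n N'E addn_gt0 -(ltr0n R) N_gt0.
have count_le : (dens_count B N')%:R / N%:R
    <= m%:R / N%:R + dens_ratio R [set j | B (j + m)%N] N.
  by rewrite dens_ratioE -mulrDl ler_wpM2r // -natrD ler_nat N'E dens_count_shift.
lra.
Qed.

Lemma full_upper_dens_unbounded {A} :
  full_upper_dens R A -> forall M, exists2 j, (M <= j)%N & A j.
Proof.
move=> F M; have [N _] := full_upper_dens_shift M F 1 ltr01 0%N.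
rewrite subrr; case: (pselect (exists j, A (j + M)%N)) => [[j AjM] _|noA].
  by exists (j + M)%N; rewrite ?leq_addl.
rewrite dens_ratioE /dens_count big1 ?mul0r ?ltxx // => j _.
by case: (boolP (j \in _)) => // /set_mem AjM; case: noA; exists j.
Qed.

End density.

Lemma term_le_nneseries {R : realType} {u : nat -> \bar R} k :
  (forall i, (0 <= u i)%E) -> (u k <= \sum_(i <oo) u i)%E.
Proof.
move=> u_ge0; apply: le_trans (nneseries_lim_ge k.+1 (fun i _ _ => u_ge0 i)).
by rewrite big_nat_recr //=; apply: leeDr; exact: sume_ge0.
Qed.

Definition weighted_shift_sum {R : realType} (a : nat -> \bar R) (m : nat -> nat)
    (j : nat) : \bar R :=
  \sum_(k <oo) (k.+1%:R)%:E * a (m k + j)%N.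

Definition distr_irregular {R : realType} (b : nat -> \bar R) :=
  [/\ (b 0%N < +oo)%E,
      forall r : R, 0 < r -> full_upper_dens R [set j | (b j < r%:E)%E] &
      forall M : R, full_upper_dens R [set j | (M%:E <= b j)%E]].

Definition distr_scrambled {R : realType} (a : nat -> \bar R) :=
  (forall r : R, 0 < r -> full_upper_dens R [set j | (a j < r%:E)%E]) /\
  exists2 eps : R, 0 < eps & full_upper_dens R [set j | (eps%:E <= a j)%E].

Section weighted_shift_sum.
Context {R : realType}.
Variables (a : nat -> \bar R) (C : R).
Hypothesis a_ge0 : forall j, (0 <= a j)%E.
Hypothesis C_ge1 : 1 <= C.
Hypothesis a_shift : forall i j, (a (i + j)%N <= (C ^+ i)%:E * a j)%E.
Hypothesis a_small : forall r : R, 0 < r -> full_upper_dens R [set j | (a j < r%:E)%E].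

Lemma a_shift_le {i j n} : (i <= n)%N -> (a (i + j)%N <= (C ^+ n)%:E * a j)%E.
Proof.
move=> i_le_n; apply: (le_trans (a_shift i j)); apply: lee_wpmul2r => //.
by rewrite lee_fin ler_weXn2l.
Qed.

Lemma weighted_shift_sum_large_often (m : nat -> nat) eps : 0 < eps ->
  full_upper_dens R [set j | (eps%:E <= a j)%E] ->
  forall M : R, full_upper_dens R [set j | (M%:E <= weighted_shift_sum a m j)%E].
Proof.
move=> eps_gt0 a_large M; set k := Num.truncn (M / eps).
have M_lt : M < k.+1%:R * eps by rewrite -ltr_pdivrMr // truncnS_gt.
apply: full_upper_dens_sub (full_upper_dens_shift (m k) a_large) => j /= a_jm.
apply: le_trans (term_le_nneseries k _); last by move=> i; rewrite mule_ge0.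
by rewrite addnC (le_trans _ (lee_wpmul2l _ a_jm)) // -EFinM lee_fin ltW.
Qed.

(* [weight n M] absorbs the factor [C ^+ M] of [M] shift steps and still leaves
   [2^-(k+1) / (K+1)] for the [k]-th term whenever [k, K <= n]. *)
Definition weight (k n : nat) : R := ((k.+1 ^ 2 * 2 ^ k.+1)%:R * C ^+ n)^-1.

Lemma weight_gt0 k n : 0 < weight k n.
Proof.
rewrite invr_gt0 mulr_gt0 ?ltr0n ?muln_gt0 ?expn_gt0 //.
by rewrite exprn_gt0 // (lt_le_trans ltr01).
Qed.

Lemma weighted_term_le {K k n M x y} : (k <= n)%N -> (K <= n)%N ->
  (a x <= (C ^+ M)%:E * a y)%E -> (a y < (weight n M)%:E)%E ->
  ((k.+1%:R)%:E * a x <= ((K.+1%:R)^-1 / (2 ^ k.+1)%:R)%:E)%E.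
Proof.
move=> kn Kn axy ay.
have CM_gt0 : 0 < C ^+ M by rewrite exprn_gt0 // (lt_le_trans ltr01).
apply: (le_trans (lee_wpmul2l _ axy)) => //.
apply: (le_trans (lee_wpmul2l _ (lee_wpmul2l _ (ltW ay))));
  rewrite ?lee_fin ?(ltW CM_gt0) //.
rewrite /weight invfM [C ^+ M * _]mulrCA mulfV ?gt_eqF // mulr1 -invfM -natrM.
rewrite ler_pdivrMr ?ltr0n ?muln_gt0 ?expn_gt0 // mulrC.
rewrite ler_pdivlMr ?ltr0n ?muln_gt0 ?expn_gt0 // -natrM ler_nat mulnA.
by rewrite leq_mul ?leq_pexp2l // -mulnn leq_mul.
Qed.

Definition next_small (m0 : nat) (r : R) : nat :=
  xget 0%N [set m | (m0 <= m)%N /\ (a m < r%:E)%E].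

Lemma next_smallP m0 r : 0 < r ->
  (m0 <= next_small m0 r)%N /\ (a (next_small m0 r) < r%:E)%E.
Proof.
move=> r_gt0; apply: (@xgetPex _ 0%N [set m | (m0 <= m)%N /\ (a m < r%:E)%E]).
by have [m ? ?] := full_upper_dens_unbounded (a_small r r_gt0) m0; exists m.
Qed.

Definition next_dense (N0 : nat) (r e : R) : nat :=
  xget 0%N [set N | (N0 <= N)%N /\ 1 - e < dens_ratio R [set j | (a j < r%:E)%E] N].

Lemma next_denseP N0 r e : 0 < r -> 0 < e ->
  (N0 <= next_dense N0 r e)%N /\
  1 - e < dens_ratio R [set j | (a j < r%:E)%E] (next_dense N0 r e).
Proof.
move=> r_gt0 e_gt0.
apply: (@xgetPex _ 0%N
  [set N | (N0 <= N)%N /\ 1 - e < dens_ratio R [set j | (a j < r%:E)%E] N]).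
by have [N ? ?] := a_small r r_gt0 e e_gt0 N0; exists N.
Qed.

(* [lag k] makes the [k]-th term small for all shifts up to the previous
   horizon; [horizon k] is then chosen so that, for a proportion
   [> 1 - 1/(k+1)] of the [j] below it, [a j] is small enough for all the
   terms of index [<= k] at once. *)
Fixpoint stage (k : nat) : nat * nat :=
  let: (m0, N0) := if k is k'.+1 then stage k' else (0%N, 0%N) in
  let m := next_small m0 (weight k N0) in
  (m, next_dense (maxn k N0) (weight k m) (k.+1%:R)^-1).

Definition lag k := (stage k).1.
Definition horizon k := (stage k).2.
Definition prev_lag k := if k is k'.+1 then lag k' else 0%N.
Definition prev_horizon k := if k is k'.+1 then horizon k' else 0%N.

Lemma stageE k : stage k =
  (next_small (prev_lag k) (weight k (prev_horizon k)),
   next_dense (maxn k (prev_horizon k))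
     (weight k (next_small (prev_lag k) (weight k (prev_horizon k)))) (k.+1%:R)^-1).
Proof. by case: k => [|k] //=; rewrite /lag /horizon; case: (stage k). Qed.

Lemma lag_small k :
  (prev_lag k <= lag k)%N /\ (a (lag k) < (weight k (prev_horizon k))%:E)%E.
Proof. by rewrite /lag stageE; apply/next_smallP/weight_gt0. Qed.

Lemma horizon_dense k : (maxn k (prev_horizon k) <= horizon k)%N /\
  1 - (k.+1%:R)^-1 < dens_ratio R [set j | (a j < (weight k (lag k))%:E)%E] (horizon k).
Proof. by rewrite /horizon /lag stageE; apply: next_denseP; rewrite ?weight_gt0. Qed.

Lemma lag_mono : {homo lag : i j / (i <= j)%N}.
Proof.
apply: homo_leq => [//|y x z|k]; first exact: leq_trans.
exact: (lag_small k.+1).1.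
Qed.

Lemma horizon_mono : {homo horizon : i j / (i <= j)%N}.
Proof.
apply: homo_leq => [//|y x z|k]; first exact: leq_trans.
exact: leq_trans (leq_maxr _ _) (horizon_dense k.+1).1.
Qed.

Lemma lag_term_early {K k j} : (k <= K)%N -> (a j < (weight K (lag K))%:E)%E ->
  ((k.+1%:R)%:E * a (lag k + j)%N <= ((K.+1%:R)^-1 / (2 ^ k.+1)%:R)%:E)%E.
Proof.
move=> kK; apply: (weighted_term_le kK (leqnn K)).
exact/a_shift_le/lag_mono.
Qed.

Lemma lag_term_late {K k j} : (K <= k)%N -> (j <= prev_horizon k)%N ->
  ((k.+1%:R)%:E * a (lag k + j)%N <= ((K.+1%:R)^-1 / (2 ^ k.+1)%:R)%:E)%E.
Proof.
move=> Kk j_le; apply: (weighted_term_le (leqnn k) Kk _ (lag_small k).2).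
by rewrite addnC; exact: a_shift_le.
Qed.

Lemma weighted_shift_sum0 : (weighted_shift_sum a lag 0 <= 1%:E)%E.
Proof.
apply: le_trans (epsilon_trick0 xpredT ler01).
apply: lee_nneseries => [k _ _|k _]; first by rewrite mule_ge0.
by have := lag_term_late (leq0n k) (leq0n _); rewrite mulr1n invr1.
Qed.

Lemma weighted_shift_sum_small {K j} :
  (a j < (weight K (lag K))%:E)%E -> (j <= horizon K)%N ->
  (weighted_shift_sum a lag j <= ((K.+1%:R)^-1)%:E)%E.
Proof.
move=> a_j j_le; apply: le_trans (epsilon_trick0 xpredT _); last by rewrite invr_ge0.
apply: lee_nneseries => [k _ _|k _]; first by rewrite mule_ge0.
have [kK|Kk] := leqP k K; first exact: lag_term_early.
apply: lag_term_late (ltnW Kk) _; case: k Kk => // k; rewrite ltnS => Kk.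
exact: leq_trans j_le (horizon_mono _ _ Kk).
Qed.

Lemma weighted_shift_sum_small_often r : 0 < r ->
  full_upper_dens R [set j | (weighted_shift_sum a lag j < r%:E)%E].
Proof.
move=> r_gt0 e e_gt0 M.
have inv_lt (x : R) K : 0 < x -> (Num.truncn x^-1 <= K)%N -> (K.+1%:R)^-1 < x.
  move=> x_gt0 xK; rewrite -[X in _ < X](invrK x) ltf_pV2 ?posrE ?invr_gt0 ?ltr0n //.
  by apply: (lt_le_trans (truncnS_gt _)); rewrite ler_nat ltnS.
set K := maxn M (maxn (Num.truncn e^-1) (Num.truncn r^-1)).
have [/(leq_trans (leq_maxl _ _)) KN dense] := horizon_dense K.
exists (horizon K); first by apply: leq_trans KN; rewrite leq_maxl.
have Ke : (K.+1%:R)^-1 < e by apply: inv_lt; rewrite // !leq_max leqnn !orbT.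
have Kr : (K.+1%:R)^-1 < r by apply: inv_lt; rewrite // !leq_max leqnn !orbT.
apply: (lt_le_trans (lt_trans _ dense)); first by rewrite ltrD2l ltrN2.
apply: le_dens_ratio => j /andP[_ j_le] /= a_j.
by apply: (le_lt_trans (weighted_shift_sum_small a_j j_le)); rewrite lte_fin.
Qed.

Lemma distr_irregular_weighted_shift_sum eps : 0 < eps ->
  full_upper_dens R [set j | (eps%:E <= a j)%E] ->
  distr_irregular (weighted_shift_sum a lag).
Proof.
move=> eps_gt0 a_large; split.
- exact: le_lt_trans weighted_shift_sum0 (ltry _).
- exact: weighted_shift_sum_small_often.
- exact: weighted_shift_sum_large_often eps_gt0 a_large.
Qed.

End weighted_shift_sum.

Lemma countable_inj_image {T U} {A : set T} {f : T -> U} :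
  {in A &, injective f} -> countable (f @` A) -> countable A.
Proof.
move=> f_inj /countable_injP[h h_inj]; apply/countable_injP.
exists (h \o f) => x y xA yA /h_inj hfxy; apply: f_inj => //.
by apply: hfxy; rewrite inE; [exists x | exists y]; rewrite // -inE.
Qed.

Lemma not_countable_itv01 (R : realType) : ~ countable [set l : R | 0 < l <= 1].
Proof.
move=> /countable_lebesgue_measure0.
have -> : [set l : R | 0 < l <= 1] = [set` `]0%R, 1%R]].
  by apply/seteqP; split => l; rewrite /= in_itv.
rewrite lebesgue_measure_itv /= lte_fin ltr01 oppr0 adde0 => /eqP.
by rewrite eqe oner_eq0.
Qed.

Lemma lt_poweRV (R : realType) (I : \bar R) (s t : R) : 0 < s -> (0 <= I)%E -> 0 < t ->
  (I `^ s^-1 < t%:E)%E = (I < (t `^ s)%:E)%E.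
Proof.
case: I => [x| |] // s_gt0 + t_gt0.
- rewrite lee_fin => x_ge0; rewrite poweR_EFin !lte_fin; apply/idP/idP => lt_xt.
  + have := @gt0_ltr_powR _ s s_gt0 (x `^ s^-1) t.
    rewrite -powRrM mulVf ?gt_eqF // powRr1 //.
    by apply; rewrite // nnegrE ?powR_ge0 ?ltW.
  + have sV_gt0 : 0 < s^-1 by rewrite invr_gt0.
    have := @gt0_ltr_powR _ s^-1 sV_gt0 x (t `^ s).
    rewrite -powRrM mulfV ?gt_eqF // powRr1 ?ltW //.
    by apply; rewrite // nnegrE ?powR_ge0.
- by move=> _; rewrite poweRyr ?invr_neq0 ?gt_eqF.
Qed.

Lemma comp_iter_dist_lt d (X : measurableType d) (R : realType)
    (mu : {measure set X -> \bar R}) (q : R) (phi : X -> X) (f g : X -> R) j t :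
  0 < q -> 0 < t ->
  (comp_iter_dist mu q phi f g j < t%:E)%E =
  (\int[mu]_x (`|f (iter j phi x) - g (iter j phi x)| `^ q)%:E < (t `^ q)%:E)%E.
Proof.
move=> q_gt0 t_gt0; rewrite /comp_iter_dist unlock lt_poweRV //.
by apply: integral_ge0 => x _; rewrite lee_fin powR_ge0.
Qed.

Section composition_operator.
Context {d : measure_display} {X : measurableType d} {R : realType}.
Variable mu : {measure set X -> \bar R}.
Variables (phi : X -> X) (c : R).
Hypothesis mphi : measurable_fun setT phi.
Hypothesis c_ge0 : 0 <= c.
Hypothesis mu_preimage_le :
  forall B : set X, measurable B -> (mu (phi @^-1` B) <= c%:E * mu B)%E.
Local Open Scope ereal_scope.

Lemma measurable_iter n : measurable_fun setT (iter n phi).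
Proof. by elim: n => [|n IH]; [exact: measurable_id | exact: measurableT_comp IH]. Qed.

Lemma measure_iter_preimage_le n B : measurable B ->
  mu (iter n phi @^-1` B) <= (c ^+ n)%:E * mu B.
Proof.
move=> mB; elim: n => [|n IH]; first by rewrite expr0 mul1e.
have -> : iter n.+1 phi @^-1` B = phi @^-1` (iter n phi @^-1` B).
  by apply/seteqP; split => x /=; rewrite -iterS iterSr.
have mBn : measurable (iter n phi @^-1` B).
  by rewrite -[X in measurable X]setTI; exact: measurable_iter.
apply: (le_trans (mu_preimage_le _ mBn)).
by rewrite exprS EFinM -muleA; apply: lee_wpmul2l; rewrite ?lee_fin.
Qed.

Lemma ae_iter j {P : X -> Prop} :
  {ae mu, forall x, P x} -> {ae mu, forall x, P (iter j phi x)}.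
Proof.
case=> N [mN N0 PN]; exists (iter j phi @^-1` N); split => [||x /PN//].
  by rewrite -[X in measurable X]setTI; exact: measurable_iter.
apply/eqP; rewrite eq_le measure_ge0 andbT.
by rewrite (le_trans (measure_iter_preimage_le j _ mN)) // N0 mule0.
Qed.

Lemma integral_comp_le (g : X -> \bar R) : measurable_fun [set: X] g ->
  (forall x, 0 <= g x) -> \int[mu]_x g (phi x) <= c%:E * \int[mu]_x g x.
Proof.
move=> mg g_ge0.
have -> : \int[mu]_x g (phi x) = \int[pushforward mu phi]_x g x.
  by rewrite ge0_integral_pushforward.
rewrite (_ : c%:E = (NngNum c_ge0)%:num%:E) // -ge0_integral_mscale //.
exact: ge0_le_measure_integral.
Qed.

Definition orbit_integral (g : X -> \bar R) j := \int[mu]_x g (iter j phi x).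

Lemma orbit_integral_ge0 {g} :
  (forall x, 0 <= g x) -> forall j, 0 <= orbit_integral g j.
Proof. by move=> g_ge0 j; exact: integral_ge0. Qed.

Lemma orbit_integral_shift {g} : measurable_fun [set: X] g -> (forall x, 0 <= g x) ->
  forall i j, orbit_integral g (i + j) <= (c ^+ i)%:E * orbit_integral g j.
Proof.
move=> mg g_ge0; elim=> [|i IH] j; first by rewrite expr0 mul1e.
have mgj : measurable_fun [set: X] (fun x => g (iter (i + j) phi x)).
  exact: measurableT_comp mg (measurable_iter _).
rewrite /orbit_integral addSn; under eq_integral do rewrite iterSr.
apply: (le_trans (integral_comp_le _ mgj (fun x => g_ge0 _))).
by rewrite exprS EFinM -muleA; apply: lee_wpmul2l; [rewrite lee_fin | exact: IH].
Qed.

Definition weighted_iter_sum (g : X -> \bar R) (m : nat -> nat) x :=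
  \sum_(k <oo) (k.+1%:R)%:E * g (iter (m k) phi x).

Lemma weighted_iter_sum_ge0 {g} m : (forall x, 0 <= g x) ->
  forall x, 0 <= weighted_iter_sum g m x.
Proof. by move=> g_ge0 x; apply: nneseries_ge0 => k _ _; rewrite mule_ge0. Qed.

Lemma measurable_weighted_iter_sum {g} m : measurable_fun [set: X] g ->
  (forall x, 0 <= g x) -> measurable_fun [set: X] (weighted_iter_sum g m).
Proof.
move=> mg g_ge0; apply: ge0_emeasurable_sum => [k x _ _|k _]; first by rewrite mule_ge0.
apply: emeasurable_funM => //; apply: measurableT_comp mg (measurable_iter _).
Qed.

Lemma orbit_integral_weighted_iter_sum {g} m : measurable_fun [set: X] g ->
  (forall x, 0 <= g x) ->
  orbit_integral (weighted_iter_sum g m) = weighted_shift_sum (orbit_integral g) m.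
Proof.
move=> mg g_ge0; apply/funext => j; rewrite /orbit_integral integral_nneseries //.
- apply: eq_eseriesr => k _; rewrite ge0_integralZl_EFin //.
  + by under eq_integral do rewrite -iterD.
  + exact: measurableT_comp mg
      (measurableT_comp (measurable_iter _) (measurable_iter _)).
- move=> k; apply: emeasurable_funM => //.
  exact: measurableT_comp mg (measurableT_comp (measurable_iter _) (measurable_iter _)).
- by move=> k x _; rewrite mule_ge0.
Qed.

Section irregular_vector.
Local Open Scope ring_scope.
Variables (G : X -> \bar R) (q : R).
Hypothesis mG : measurable_fun [set: X] G.
Hypothesis G_ge0 : forall x, (0 <= G x)%E.
Hypothesis q_gt0 : 0 < q.
Hypothesis G_irregular : distr_irregular (orbit_integral G).

Lemma fin_num_ae : {ae mu, forall x, G x \is a fin_num}.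
Proof.
have [G0_fin _ _] := G_irregular.
have /(integrable_ae measurableT) : mu.-integrable setT G.
  apply/integrableP; split => //.
  by under eq_integral do rewrite gee0_abs //.
by apply: filterS => x; apply.
Qed.

Lemma measurable_fine_iter j :
  measurable_fun [set: X] (fun x => fine (G (iter j phi x))).
Proof.
exact: measurableT_comp (measurableT_comp (fine_measurable measurableT) mG)
  (measurable_iter j).
Qed.

Lemma orbit_integral_fine :
  orbit_integral (fun x => (fine (G x))%:E) = orbit_integral G.
Proof.
apply/funext => j; apply: ae_eq_integral => //.
- exact/measurable_EFinP/measurable_fine_iter.
- exact: measurableT_comp mG (measurable_iter j).
- by rewrite /ae_eq; apply: filterS (ae_iter j fin_num_ae) => x /fineK.
Qed.

Definition irregular_vector x := fine (G x) `^ q^-1.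

Lemma irregular_vector_ge0 x : 0 <= irregular_vector x.
Proof. exact: powR_ge0. Qed.

Lemma irregular_vector_powR x : irregular_vector x `^ q = fine (G x).
Proof. by rewrite -powRrM mulVf ?lt0r_neq0 // powRr1 // fine_ge0. Qed.

Lemma measurable_irregular_vector : measurable_fun [set: X] irregular_vector.
Proof.
apply: measurableT_comp (measurable_powR _) _.
exact: measurableT_comp (fine_measurable measurableT) mG.
Qed.

Lemma comp_iter_dist_irregular (l l' : R) j :
  comp_iter_dist mu q phi (fun x => l * irregular_vector x)
    (fun x => l' * irregular_vector x) j
  = (((`|l - l'| `^ q)%:E * orbit_integral G j) `^ q^-1)%E.
Proof.
rewrite /comp_iter_dist unlock -orbit_integral_fine /orbit_integral.
rewrite -ge0_integralZl_EFin ?powR_ge0 //.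
- congr poweR; apply: eq_integral => x _ /=.
  rewrite -EFinM; congr EFin.
  rewrite -mulrBl normrM (ger0_norm (irregular_vector_ge0 _)).
  by rewrite powRM ?irregular_vector_ge0 // irregular_vector_powR.
- by move=> x _; rewrite lee_fin fine_ge0.
- exact/measurable_EFinP/measurable_fine_iter.
Qed.

Lemma comp_iter_dist_irregular_lt (l l' : R) j t : 0 < t ->
  (comp_iter_dist mu q phi (fun x => l * irregular_vector x)%R
     (fun x => l' * irregular_vector x)%R j < t%:E)%E =
  ((`|l - l'| `^ q)%:E * orbit_integral G j < (t `^ q)%:E)%E.
Proof.
move=> t_gt0; rewrite comp_iter_dist_irregular lt_poweRV //.
by rewrite mule_ge0 ?lee_fin ?powR_ge0 // orbit_integral_ge0.
Qed.

Lemma scale_irregular_vector_inj (l l' : R) :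
  (fun x => l * irregular_vector x) = (fun x => l' * irregular_vector x) %[ae mu] ->
  l = l'.
Proof.
move=> scaled_eq; have [//|neq_ll'] := eqVneq l l'; exfalso.
have [_ _ G_large] := G_irregular.
have [j _ Gj_ge1] := full_upper_dens_unbounded (G_large 1) 0%N.
suff Gj0 : orbit_integral G j = 0%E by move: Gj_ge1; rewrite /= Gj0 lee_fin ler10.
rewrite -orbit_integral_fine /orbit_integral -[RHS](integral0 mu setT).
apply: ae_eq_integral => //.
- exact/measurable_EFinP/measurable_fine_iter.
- rewrite /ae_eq; apply: filterS (ae_iter j scaled_eq) => x /(_ I)/eqP.
  rewrite -subr_eq0 -mulrBl mulf_eq0 subr_eq0 (negbTE neq_ll') /= => /eqP w0 _.
  by rewrite -irregular_vector_powR w0 powR0 ?lt0r_neq0.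
Qed.

Theorem comp_distr_chaotic_of_irregular : comp_distr_chaotic mu q phi.
Proof.
have [G0_fin G_small G_large] := G_irregular.
pose scale (l : R) x := l * irregular_vector x.
have scale_inj : {in [set l : R | 0 < l <= 1] &, injective scale}.
  move=> l l' _ _ E; apply: scale_irregular_vector_inj.
  by apply: aeW => x _; exact: (congr1 (fun f => f x) E).
exists (scale @` [set l : R | 0 < l <= 1]); split.
- move=> _ [l _ <-]; split; first exact: measurable_funM measurable_irregular_vector.
  rewrite /finite_norm (_ : Lnorm _ _ _ = comp_iter_dist mu q phi (scale l) (scale 0) 0).
    by rewrite comp_iter_dist_irregular poweR_lty // lte_mul_pinfty ?lee_fin ?powR_ge0.
  by apply: eq_Lnorm => x /=; rewrite /scale mul0r subr0.
- by move=> _ _ [l _ <-] [l' _ <-] /scale_irregular_vector_inj ->.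
- by move/(countable_inj_image scale_inj); exact: not_countable_itv01.
exists 1 => // delta delta_gt0 _ _ [l /andP[l_gt0 l_le1] <-] [l' /andP[l'_gt0 l'_le1] <-].
move=> neq.
have neq_ll' : l != l' by apply/eqP => eq_ll'; apply: neq; rewrite eq_ll'.
set theta := `|l - l'| `^ q.
have theta_gt0 : 0 < theta by rewrite powR_gt0 // normr_gt0 subr_eq0.
have theta_le1 : theta <= 1.
  have dist_le1 : `|l - l'| <= 1 by rewrite ler_norml; apply/andP; split; lra.
  apply: le_trans (ge0_ler_powR (ltW q_gt0) _ _ dist_le1) _; rewrite ?nnegrE //.
  by rewrite powR1.
split.
- apply/lower_dens0P; apply: null_lower_dens_sub (full_upper_densC (G_large theta^-1)).
  move=> j /=; rewrite comp_iter_dist_irregular_lt // powR1 => dist_lt Gj_ge.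
  move: dist_lt; apply/negP; rewrite -leNgt -(mulfV (lt0r_neq0 theta_gt0)) EFinM.
  by apply: lee_wpmul2l; rewrite // lee_fin ltW.
- apply/upper_dens1P; apply: full_upper_dens_sub (G_small _ (powR_gt0 q delta_gt0)).
  move=> j /= Gj_lt; rewrite comp_iter_dist_irregular_lt //.
  apply: le_lt_trans Gj_lt; rewrite -[leRHS]mul1e.
  by apply: lee_wpmul2r; rewrite ?orbit_integral_ge0 ?lee_fin.
Qed.

End irregular_vector.

Lemma distr_scrambled_of_chaotic {p : R} : (0 < p)%R -> comp_distr_chaotic mu p phi ->
  exists g : X -> \bar R,
    [/\ measurable_fun [set: X] g, forall x, 0 <= g x &
        distr_scrambled (orbit_integral g)].
Proof.
move=> p_gt0 [Gamma [Gamma_Lp _ Gamma_unc [eps eps_gt0 Gamma_dc]]].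
have [f [f' [Gf Gf' neq_ff']]] : exists f f', [/\ Gamma f, Gamma f' & f <> f'].
  apply: contrapT => no_pair; apply: Gamma_unc; apply/countable_injP.
  exists (fun=> 0%N) => f f'; rewrite !inE => Gf Gf' _.
  by apply: contrapT => neq_ff'; apply: no_pair; exists f, f'.
have [[mf _] [mf' _]] := (Gamma_Lp f Gf, Gamma_Lp f' Gf').
exists (fun x => (`|f x - f' x| `^ p)%:E); split.
- apply/measurable_EFinP; apply: (measurableT_comp (measurable_powR _)).
  apply: measurableT_comp; first exact: normr_measurable.
  exact: measurable_funB.
- by move=> x; rewrite lee_fin powR_ge0.
have dc delta (delta_gt0 : (0 < delta)%R) :=
  Gamma_dc delta delta_gt0 f f' Gf Gf' neq_ff'.
split => [r r_gt0|].
  have r_root_gt0 : (0 < r `^ p^-1)%R by rewrite powR_gt0.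
  apply: full_upper_dens_sub (upper_dens1P.1 (dc _ r_root_gt0).2) => j /=.
  rewrite comp_iter_dist_lt // -powRrM mulVf ?lt0r_neq0 // powRr1 //.
  exact: ltW.
exists (eps `^ p)%R; first by rewrite powR_gt0.
apply: full_upper_dens_sub (null_lower_densC (lower_dens0P.1 (dc _ ltr01).1)).
by move=> j /=; rewrite comp_iter_dist_lt // leNgt => /negP.
Qed.

Lemma comp_distr_chaotic_exponent (p q : R) : (0 < p)%R -> (0 < q)%R ->
  comp_distr_chaotic mu p phi -> comp_distr_chaotic mu q phi.
Proof.
move=> p_gt0 q_gt0 /(distr_scrambled_of_chaotic p_gt0).
move=> [g [mg g_ge0 [g_small [eps eps_gt0 g_large]]]].
set C := Num.max c 1%R.
have C_ge1 : (1 <= C)%R by rewrite le_max lexx orbT.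
have g_shift i j : orbit_integral g (i + j) <= (C ^+ i)%:E * orbit_integral g j.
  apply: le_trans (orbit_integral_shift mg g_ge0 i j) _.
  apply: lee_wpmul2r; first exact: orbit_integral_ge0.
  by rewrite lee_fin lerXn2r ?nnegrE ?le_max ?lexx ?c_ge0.
have g_irregular := distr_irregular_weighted_shift_sum (orbit_integral g) C
  (orbit_integral_ge0 g_ge0) C_ge1 g_shift g_small eps eps_gt0 g_large.
pose m := lag (orbit_integral g) C.
apply: (comp_distr_chaotic_of_irregular _ q (measurable_weighted_iter_sum m mg g_ge0)
  (weighted_iter_sum_ge0 m g_ge0) q_gt0).
by rewrite orbit_integral_weighted_iter_sum.
Qed.

End composition_operator.

Theorem mainTheorem2 (d : measure_display) (X : measurableType d) (R : realType)
    (mu : {measure set X -> \bar R}) (phi : X -> X) (c : R) (p p' : R) :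
  sigma_finite setT mu ->
  measurable_fun setT phi ->
  0 < c ->
  (forall B : set X, measurable B -> (mu (phi @^-1` B) <= c%:E * mu B)%E) ->
  1 <= p -> 1 <= p' ->
  comp_distr_chaotic mu p phi <-> comp_distr_chaotic mu p' phi.
Proof.
move=> _ mphi c_gt0 mu_preimage_le p_ge1 p'_ge1.
have p_gt0 : 0 < p := lt_le_trans ltr01 p_ge1.
have p'_gt0 : 0 < p' := lt_le_trans ltr01 p'_ge1.
by split; apply: (comp_distr_chaotic_exponent _ _ _ mphi (ltW c_gt0) mu_preimage_le).
Qed.
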